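(* In the setting below, if $\varphi,\psi\in X_N$ satisfy $\mathrm{dist}_\infty(\mathrm{supp}\,\varphi,\mathrm{supp}\,\psi)>l-1$, then $$\langle\mathcal{T}\varphi,\psi\rangle=\langle\mathcal{T}'\varphi,\psi\rangle=\langle\mathcal{R}\varphi,\psi\rangle=\langle\mathcal{R}'\varphi,\psi\rangle=0.$$
   Context: Standing: $d\ge2$, $m\ge1$, $L\ge3$ odd, $N\ge1$. $\mathbb{T}_N=(\mathbb{Z}/L^N\mathbb{Z})^d$; $\rho_\infty(x,y)=\min\{|x-y+z|_\infty:z\in(L^N\mathbb{Z})^d\}$; $\mathrm{dist}_\infty(M_1,M_2)=\min\{\rho_\infty(x,y):x\in M_1,y\in M_2\}$. $X_N$: maps $\mathbb{T}_N\to\mathbb{R}^m$ with zero sum, $\langle\varphi,\psi\rangle=\sum_x\langle\varphi(x),\psi(x)\rangle$. $(\nabla_j\varphi)(x)=\varphi(x+e_j)-\varphi(x)$. $A:\mathbb{R}^{m\times d}\to\mathbb{R}^{m\times d}$ linear, symmetric, $(AF,F)\ge c_0|F|^2$, $c_0>0$; $(\varphi,\psi)_+=\sum_x(A\nabla\varphi(x),\nabla\psi(x))$. Let $l\ge3$ be an integer with $l-1<L^N$, $Q=\{1,\dots,l-1\}^d$. $\Pi_x$ is the $(\cdot,\cdot)_+$-orthogonal projection of $X_N$ onto $\{\varphi\in X_N:\varphi=0\text{ outside }Q+x\}$; $\mathcal{T}=l^{-d}\sum_x\Pi_x$, $\mathcal{R}=\mathrm{id}-\mathcal{T}$; $\mathcal{T}',\mathcal{R}'$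 are the adjoints with respect to $\langle\cdot,\cdot\rangle$. *)

From Stdlib Require Import ClassicalEpsilon.
From mathcomp Require Import all_boot all_order all_algebra.
Set Implicit Arguments. Unset Strict Implicit. Unset Printing Implicit Defensive.
Import Order.TTheory GRing.Theory Num.Theory.
Local Open Scope ring_scope.

(* Discrete torus (Z / n.+1 Z)^d ; used with n.+1 = L^N. *)
Definition site (d n : nat) := {ffun 'I_d -> 'I_n.+1}.

Definition shift d n (x : site d n) (j : 'I_d) : site d n :=
  [ffun k => if k == j then inZp (x k + 1) else x k].

Definition addq d n (x : site d n) (q : 'I_d -> nat) : site d n :=
  [ffun k => inZp (x k + q k)].

(* min over z in Z of |a - b + z (n+1)| *)
Definition cdist n (a b : 'I_n.+1) : nat :=
  let k := ((a + n.+1 - b) %% n.+1)%N in minn k (n.+1 - k).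

(* rho_infty(x,y) = min_{z in (n+1 Z)^d} |x - y + z|_infty *)
Definition rho d n (x y : site d n) : nat := (\max_(j < d) cdist (x j) (y j))%N.

(* y \in Q + x, Q = {1,...,l-1}^d *)
Definition inQ d n (l : nat) (x y : site d n) : bool :=
  [exists q : {ffun 'I_d -> 'I_l},
     [forall j, (0 < q j)%N] && (y == addq x (fun k => nat_of_ord (q k)))].

Section Ops.
Variables (R : realFieldType) (d n m : nat).
Local Notation F := (site d n -> 'cV[R]_m).

Definition inX (phi : F) : Prop := \sum_x phi x = 0.

Definition ip (phi psi : F) : R := \sum_x \sum_(i < m) phi x i 0 * psi x i 0.

Definition grad (phi : F) (x : site d n) : 'M[R]_(m, d) :=
  \matrix_(i, j) (phi (shift x j) i 0 - phi x i 0).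

Definition frob (F1 G1 : 'M[R]_(m, d)) : R := \sum_i \sum_j F1 i j * G1 i j.

Definition formA (A : 'M[R]_(m, d) -> 'M[R]_(m, d)) (phi psi : F) : R :=
  \sum_x frob (A (grad phi x)) (grad psi x).

Definition inV (l : nat) (x : site d n) (psi : F) : Prop :=
  inX psi /\ forall y, ~~ inQ l x y -> psi y = 0.

Definition fsub (phi psi : F) : F := fun y => phi y - psi y.

Definition choose_fn (P : F -> Prop) : F := epsilon (inhabits (fun _ => 0)) P.

Definition Pi A l x (phi : F) : F :=
  choose_fn (fun psi => inV l x psi /\
     forall chi, inV l x chi -> formA A (fsub phi psi) chi = 0).

Definition Top A l (phi : F) : F :=
  fun y => (l%:R ^- d) *: \sum_x Pi A l x phi y.

Definition Rop A l (phi : F) : F := fsub phi (Top A l phi).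

Definition adjoint (S : F -> F) (phi : F) : F :=
  choose_fn (fun psi => inX psi /\ forall chi, inX chi -> ip (S chi) phi = ip chi psi).

End Ops.

(* [Pi_x phi] lies in [V_x], whose elements are supported in the cell [Q + x].  If [psi]
   vanishes on [Q + x], then [<Pi_x phi, psi> = 0] for support reasons.  Otherwise the distance
   hypothesis forces [phi] to vanish on the closed box [x + [0, l]^d], which contains both ends of
   every bond on which the gradient of an element of [V_x] can be nonzero; so [phi] is
   [(.,.)_+]-orthogonal to [V_x] and [Pi_x phi = 0].  Summing over [x] gives [<T phi, psi> = 0].
   Since [<phi, psi> = 0], the same holds for [R = id - T], and the statements for the adjoints
   follow by exchanging [phi] and [psi].  The projections exist by Gram-Schmidt in the finite
   dimensional space [V_x], and are unique, hence linear, because [(.,.)_+] is definite on [V_x]: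
   a function of zero energy is constant, and an element of [V_x] vanishes at [x]. *)

From Pilot Require Import Defs.
From HB Require Import structures.
From mathcomp Require Import all_boot all_order all_algebra.
From Stdlib Require Import ClassicalEpsilon FunctionalExtensionality.
From mathcomp Require Import ring lra zify.
Set Implicit Arguments. Unset Strict Implicit. Unset Printing Implicit Defensive.
Import Order.TTheory GRing.Theory Num.Theory.
Local Open Scope ring_scope.
Local Notation addq := Defs.addq.

Section OrthogonalProjection.
Variables (R : realFieldType) (V : vectType R) (B : V -> V -> R).
Hypothesis BlinearZDl : forall a u v w, B (a *: u + v) w = a * B u w + B v w.
Hypothesis Bsym : forall u v, B u v = B v u.
Hypothesis Bpsd : forall u, 0 <= B u u.

Lemma form0l w : B 0 w = 0.
Proof. by have := BlinearZDl 1 0 0 w; rewrite scaler0 addr0 mul1r; lra. Qed.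

Lemma formDl u v w : B (u + v) w = B u w + B v w.
Proof. by rewrite -[u]scale1r BlinearZDl mul1r scale1r. Qed.

Lemma formZl a u w : B (a *: u) w = a * B u w.
Proof. by rewrite -[a *: u]addr0 BlinearZDl form0l addr0. Qed.

Lemma formBl u v w : B (u - v) w = B u w - B v w.
Proof. by rewrite formDl -scaleN1r formZl mulN1r. Qed.

Lemma formDr u v w : B w (u + v) = B w u + B w v.
Proof. by rewrite Bsym formDl !(Bsym w). Qed.

Lemma formZr a u w : B w (a *: u) = a * B w u.
Proof. by rewrite Bsym formZl Bsym. Qed.

(* Expand [0 <= B (w + t v) (w + t v)] at [t = - B w v / (B v v + 1)]. *)
Lemma form_isotropic_orth w v : B w w = 0 -> B w v = 0.
Proof.
move=> Bww0; set b := B w v; set c := B v v.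
have c_ge0 : 0 <= c by apply: Bpsd.
set s := (c + 1)^-1.
have s_gt0 : 0 < s by rewrite invr_gt0; lra.
have sc : s * c = 1 - s.
  by rewrite -[c in LHS](addrK 1) mulrBr mulVf ?mulr1 //; apply: lt0r_neq0; lra.
have := Bpsd (w + (- b * s) *: v).
rewrite formDl !formDr !formZl !formZr Bww0 (Bsym v w) -/b -/c.
have -> : 0 + - b * s * b + (- b * s * b + - b * s * (- b * s * c))
        = - (b * b) * s * 2 + (b * b) * s * (s * c) by ring.
rewrite sc => h.
have : b * b <= 0 by nra.
by nra.
Qed.

Lemma orth_proj_span (X : seq V) phi :
  exists2 P, P \in <<X>>%VS & forall v, v \in <<X>>%VS -> B (phi - P) v = 0.
Proof.
elim: X phi => [|u X IHX] phi.
  by exists 0 => [|v]; rewrite span_nil ?mem0v // memv0 => /eqP->; rewrite Bsym form0l.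
have [P1 P1X P1orth] := IHX phi.
have [Pu PuX Puorth] := IHX u.
set w := u - Pu; set t := B (phi - P1) w / B w w.
have orthX : forall v, v \in <<X>>%VS -> B (phi - (P1 + t *: w)) v = 0.
  by move=> v Xv; rewrite opprD addrA formBl formZl P1orth // Puorth // mulr0 subr0.
have orth_w : B (phi - (P1 + t *: w)) w = 0.
  rewrite opprD addrA formBl formZl.
  have [Bww0|Bww_neq0] := eqVneq (B w w) 0.
    by rewrite Bww0 mulr0 (Bsym _ w) form_isotropic_orth // subr0.
  by rewrite /t -mulrA mulVf // mulr1 subrr.
have sub_span_cons : (<<X>> <= <<u :: X>>)%VS by rewrite span_cons addvSr.
have u_span : u \in <<u :: X>>%VS by apply: memv_span; rewrite inE eqxx.
exists (P1 + t *: w).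
  rewrite memvD ?memvZ ?memvB //; exact: (subvP sub_span_cons).
move=> v; rewrite span_cons => /memv_addP [_ /vlineP [k ->] [v' X'v ->]].
rewrite formDr (orthX _ X'v) addr0 formZr -(subrK Pu u) -/w formDr orth_w.
by rewrite orthX // add0r mulr0.
Qed.

Lemma orth_proj_exists (U : {vspace V}) phi :
  exists2 P, P \in U & forall v, v \in U -> B (phi - P) v = 0.
Proof. by rewrite -(span_basis (vbasisP U)); apply: orth_proj_span. Qed.

End OrthogonalProjection.

Section Frobenius.
Variables (R : realFieldType) (m d : nat).
Implicit Types F G H : 'M[R]_(m, d).

Lemma frobZDl a F G H : frob (a *: F + G) H = a * frob F H + frob G H.
Proof.
rewrite /frob mulr_sumr -big_split /=; apply: eq_bigr => i _.
by rewrite mulr_sumr -big_split /=; apply: eq_bigr => j _; rewrite !mxE; ring.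
Qed.

Lemma frobC F G : frob F G = frob G F.
Proof. by apply: eq_bigr => i _; apply: eq_bigr => j _; rewrite mulrC. Qed.

Lemma frob0r F : frob F 0 = 0.
Proof. by rewrite /frob big1 // => i _; rewrite big1 // => j _; rewrite mxE mulr0. Qed.

Lemma frob_ge0 F : 0 <= frob F F.
Proof. by rewrite sumr_ge0 // => i _; rewrite sumr_ge0 // => j _; rewrite -expr2 sqr_ge0. Qed.

Lemma frob_eq0 F : frob F F = 0 -> F = 0.
Proof.
have sq_ge0 i j : 0 <= F i j * F i j by rewrite -expr2 sqr_ge0.
move/psumr_eq0P => /(_ (fun i _ => sumr_ge0 _ (fun j _ => sq_ge0 i j))) F0.
apply/matrixP => i j; move/psumr_eq0P: (F0 i isT) => /(_ (fun j _ => sq_ge0 i j)).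
by move=> /(_ j isT) /eqP; rewrite mulf_eq0 orbb mxE => /eqP.
Qed.

End Frobenius.

Section EnergyForm.
Variables (R : realFieldType) (d n m : nat) (A : 'M[R]_(m, d) -> 'M[R]_(m, d)) (c0 : R).
Hypothesis A_linear : forall (a : R) (F G : 'M[R]_(m, d)), A (a *: F + G) = a *: A F + A G.
Hypothesis A_sym : forall F G, frob (A F) G = frob F (A G).
Hypothesis c0_gt0 : 0 < c0.
Hypothesis A_coercive : forall F, c0 * frob F F <= frob (A F) F.
Local Notation F := (site d n -> 'cV[R]_m).

Lemma frobA0l G : frob (A 0) G = 0.
Proof. by rewrite A_sym frobC frob0r. Qed.

Lemma frobA_ge0 G : 0 <= frob (A G) G.
Proof. exact: le_trans (mulr_ge0 (ltW c0_gt0) (frob_ge0 G)) (A_coercive G). Qed.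

Lemma gradZD a (f g : F) x : grad (fun y => a *: f y + g y) x = a *: grad f x + grad g x.
Proof. by apply/matrixP => i j; rewrite !mxE; ring. Qed.

Lemma formAZDl a (f g h : F) :
  formA A (fun y => a *: f y + g y) h = a * formA A f h + formA A g h.
Proof.
rewrite /formA mulr_sumr -big_split /=; apply: eq_bigr => x _.
by rewrite gradZD A_linear frobZDl.
Qed.

Lemma formAC (f g : F) : formA A f g = formA A g f.
Proof. by apply: eq_bigr => x _; rewrite A_sym frobC. Qed.

Lemma formA_ge0 (f : F) : 0 <= formA A f f.
Proof. by apply: sumr_ge0 => x _; apply: frobA_ge0. Qed.

Lemma formA_eq0_grad (f : F) : formA A f f = 0 -> forall x, grad f x = 0.
Proof.
move/psumr_eq0P => /(_ (fun x _ => frobA_ge0 _)) fA0 x; apply: frob_eq0.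
have := A_coercive (grad f x); rewrite fA0 // pmulr_rle0 // => le0.
by apply/eqP; rewrite eq_le le0 frob_ge0.
Qed.

End EnergyForm.

Section Sites.
Variables d n : nat.
Implicit Types x y z w : site d n.
Local Open Scope nat_scope.

Lemma addq_ext x (q q' : 'I_d -> nat) :
  (forall k, q k = q' k) -> addq x q = addq x q'.
Proof. by move=> qq'; apply/ffunP => k; rewrite !ffunE qq'. Qed.

Lemma addq0 x : addq x (fun=> 0) = x.
Proof. by apply/ffunP => k; rewrite ffunE addn0; apply: val_inj; apply: modn_small. Qed.

Lemma shift_addq x (q : 'I_d -> nat) j :
  shift (addq x q) j = addq x (fun k => q k + (k == j)).
Proof.
apply/ffunP => k; rewrite !ffunE; case: eqP => [->|_]; last by rewrite addn0.
by apply: val_inj; rewrite /= modnDml addnA.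
Qed.

Lemma shift_inj (j : 'I_d) : injective (shift (n := n) ^~ j).
Proof.
move=> z w /ffunP zw; apply/ffunP => k; move: (zw k); rewrite !ffunE.
case: eqP => [->|_] // /(congr1 val) /= /eqP.
by rewrite eqn_modDr !modn_small ?ltn_ord // => /eqP /val_inj.
Qed.

Lemma inQP l x y :
  reflect (exists2 q : 'I_d -> nat, forall k, 0 < q k < l & y = addq x q) (inQ l x y).
Proof.
apply: (iffP existsP) => [[q /andP [/forallP q_gt0 /eqP ->]]|[q q_lt ->]].
  by exists (fun k => nat_of_ord (q k)) => // k; rewrite q_gt0 ltn_ord.
have q_ltl k : q k < l by case/andP: (q_lt k).
exists [ffun k => Ordinal (q_ltl k)]; apply/andP; split.
  by apply/forallP => k; rewrite ffunE; case/andP: (q_lt k).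
by apply/eqP; apply: addq_ext => k; rewrite ffunE.
Qed.

Lemma inQ_shift l x z j :
  inQ l x (shift z j) -> exists2 b : 'I_d -> nat, forall k, b k < l & z = addq x b.
Proof.
case/inQP=> q q_lt zj; have /andP [qj_gt0 _] := q_lt j.
exists (fun k => q k - (k == j)) => [k|].
  by case/andP: (q_lt k) => _; apply: leq_ltn_trans (leq_subr _ _).
apply: (@shift_inj j); rewrite zj shift_addq; apply: addq_ext => k.
by case: eqP => [->|_]; rewrite ?subn0 ?addn0 // subnK.
Qed.

Lemma notinQ_self l x : 0 < d -> l <= n.+1 -> ~~ inQ l x x.
Proof.
move=> d_gt0 l_le; apply/negP => /inQP [q q_lt /ffunP /(_ (Ordinal d_gt0))].
rewrite ffunE => /(congr1 val) /= x_mod.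
have : x (Ordinal d_gt0) + q (Ordinal d_gt0) == x (Ordinal d_gt0) + 0 %[mod n.+1].
  by rewrite -x_mod addn0 modn_small.
have /andP [q_gt0 q_ltl] := q_lt (Ordinal d_gt0).
by rewrite eqn_modDl mod0n modn_small ?(leq_trans q_ltl) // gtn_eqF.
Qed.

Lemma addq_shift_invariant T (f : site d n -> T) :
  (forall z j, f (shift z j) = f z) -> forall x q, f (addq x q) = f x.
Proof.
move=> f_shift x q.
suff : forall s q, \sum_k q k = s -> f (addq x q) = f x by apply.
elim=> [|s IHs] {}q sum_q.
  move/eqP: sum_q; rewrite sum_nat_eq0 => /forallP q0.
  by rewrite -{2}(addq0 x); congr f; apply: addq_ext => k; apply/eqP; apply: q0.
have [j q_j|q0] := pickP (fun k => 0 < q k); last first.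
  by move: sum_q; rewrite big1 // => k _; move/negbT: (q0 k); rewrite -eqn0Ngt => /eqP.
have q_dec k : q k = (q k - (k == j)) + (k == j).
  by case: eqP => [->|_]; rewrite ?subn0 ?addn0 // subnK.
rewrite (addq_ext x q_dec) -shift_addq f_shift IHs //.
have sum_delta : \sum_k (k == j) = 1 by rewrite (bigD1 j) //= eqxx big1 // => k /negbTE ->.
by move: sum_q; rewrite (eq_bigr _ (fun k _ => q_dec k)) big_split /= sum_delta addn1 => -[].
Qed.

Lemma cdist_le (a s t : nat) :
  cdist (inZp (a + s) : 'I_n.+1) (inZp (a + t)) <= maxn (s - t) (t - s).
Proof.
rewrite /cdist /=.
set v := (a + t) %% n.+1; set k := (_ + n.+1 - v) %% n.+1.
have v_lt : v < n.+1 by rewrite ltn_mod.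
have k_lt : k < n.+1 by rewrite ltn_mod.
have k_mod : (k + (a + t)) %% n.+1 = (a + s) %% n.+1.
  rewrite modnDml -modnDmr -/v subnK; last by rewrite (leq_trans (ltnW v_lt)) // leq_addl.
  by rewrite modnDr modn_mod.
case: (leqP t s) => ts.
  have : k + (a + t) == (s - t) + (a + t) %[mod n.+1] by rewrite k_mod addnCA subnK.
  rewrite eqn_modDr (modn_small k_lt) => /eqP ->.
  by rewrite (leq_trans (geq_minl _ _)) // (leq_trans (leq_mod _ _)) // leq_maxl.
have : (k + (t - s)) + (a + s) == 0 + (a + s) %[mod n.+1].
  by rewrite -addnA (addnCA (t - s)) subnK ?(ltnW ts) // k_mod.
rewrite eqn_modDr mod0n.
have [->|k_gt0] := posnP k; first by rewrite minnE subn0 subnn.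
move=> dvd_k; have le_k : n.+1 <= k + (t - s) by apply: dvdn_leq; rewrite ?addn_gt0 ?k_gt0.
by rewrite (leq_trans (geq_minr _ _)) // (leq_trans _ (leq_maxr _ _)) //; lia.
Qed.

Lemma rho_addq_le x (s t : 'I_d -> nat) D :
  (forall k, maxn (s k - t k) (t k - s k) <= D) -> rho (addq x s) (addq x t) <= D.
Proof.
move=> st_le; apply/bigmax_leqP => j _; rewrite !ffunE.
exact: leq_trans (cdist_le _ _ _) (st_le j).
Qed.

End Sites.

Section InnerProduct.
Variables (R : realFieldType) (d n m : nat).
Local Notation F := (site d n -> 'cV[R]_m).
Implicit Types f g h : F.

Lemma ipZDl a f g h : ip (fun y => a *: f y + g y) h = a * ip f h + ip g h.
Proof.
rewrite /ip mulr_sumr -big_split; apply: eq_bigr => y _ /=.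
by rewrite mulr_sumr -big_split; apply: eq_bigr => i _ /=; rewrite !mxE; ring.
Qed.

Lemma fsub_combE f g : fsub f g = (fun y => (-1) *: g y + f y).
Proof. by apply: functional_extensionality => y; rewrite scaleN1r addrC. Qed.

Lemma ipBl f g h : ip (fsub f g) h = ip f h - ip g h.
Proof. by rewrite fsub_combE ipZDl mulN1r addrC. Qed.

Lemma ipZl a f g : ip (fun y => a *: f y) g = a * ip f g.
Proof.
rewrite /ip mulr_sumr; apply: eq_bigr => y _.
by rewrite mulr_sumr; apply: eq_bigr => i _; rewrite mxE mulrA.
Qed.

Lemma ip_suml (I : finType) (fs : I -> F) g :
  ip (fun y => \sum_i fs i y) g = \sum_i ip (fs i) g.
Proof.
rewrite /ip [RHS]exchange_big /=; apply: eq_bigr => y _.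
by rewrite [RHS]exchange_big /=; apply: eq_bigr => k _; rewrite summxE mulr_suml.
Qed.

Lemma ipC f g : ip f g = ip g f.
Proof. by apply: eq_bigr => y _; apply: eq_bigr => i _; rewrite mulrC. Qed.

Lemma ip_eq0 f g : (forall y, f y = 0 \/ g y = 0) -> ip f g = 0.
Proof.
move=> fg0; apply: big1 => y _; apply: big1 => i _.
by case: (fg0 y) => ->; rewrite mxE ?mul0r ?mulr0.
Qed.

Lemma ip_cst_eq0 f (c : 'cV[R]_m) : inX f -> ip f (fun=> c) = 0.
Proof.
move=> sum_f; rewrite /ip exchange_big big1 //= => i _.
by rewrite -mulr_suml -summxE sum_f mxE mul0r.
Qed.

End InnerProduct.

Section Riesz.
Variables (R : realFieldType) (d n m : nat).
Local Notation F := (site d n -> 'cV[R]_m).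
Variable g : F -> R.
Hypothesis g_linear : forall a f h, g (fun y => a *: f y + h y) = a * g f + g h.

Lemma linear_fun0 : g (fun=> 0) = 0.
Proof.
have := g_linear 1 (fun=> 0) (fun=> 0); rewrite mul1r.
under [fun y => _]functional_extensionality do rewrite scaler0 addr0.
by move=> g0D; lra.
Qed.

Lemma linear_funZ a f : g (fun y => a *: f y) = a * g f.
Proof.
have := g_linear a f (fun=> 0); rewrite linear_fun0 addr0.
by under [fun y => _]functional_extensionality do rewrite addr0.
Qed.

Lemma linear_fun_sum (I : Type) (s : seq I) (fs : I -> F) :
  g (fun y => \sum_(i <- s) fs i y) = \sum_(i <- s) g (fs i).
Proof.
elim: s => [|i s IHs].
  by rewrite big_nil -linear_fun0; under [fun y => _]functional_extensionality do rewrite big_nil.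
rewrite big_cons -IHs -[g (fs i)]mul1r -g_linear.
by congr g; apply: functional_extensionality => y; rewrite big_cons scale1r.
Qed.

Lemma riesz_repr : exists r, forall chi, g chi = ip chi r.
Proof.
pose unit_fn y (i : 'I_m) : F := fun z => (z == y)%:R *: delta_mx i 0.
exists (fun y => \col_i g (unit_fn y i)) => chi.
have chiE : chi = fun z => \sum_y \sum_i chi y i 0 *: unit_fn y i z.
  apply: functional_extensionality => z; rewrite (bigD1 z) //= [X in _ + X]big1 ?addr0 => [|y yz].
    rewrite [LHS]matrix_sum_delta; apply: eq_bigr => i _.
    by rewrite big_ord1 /unit_fn eqxx scale1r.
  by apply: big1 => i _; rewrite /unit_fn eq_sym (negbTE yz) scale0r scaler0.
rewrite {1}chiE linear_fun_sum; apply: eq_bigr => y _.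
by rewrite linear_fun_sum; apply: eq_bigr => i _; rewrite linear_funZ mxE.
Qed.

End Riesz.

Section Adjoint.
Variables (R : realFieldType) (d n m : nat).
Local Notation F := (site d n -> 'cV[R]_m).
Variable S : F -> F.
Hypothesis S_linear : forall a f g, S (fun y => a *: f y + g y) = fun y => a *: S f y + S g y.

(* Subtracting its mean turns a Riesz representative into an element of [X_N]. *)
Lemma adjoint_exists phi : exists psi, inX psi /\
  forall chi, inX chi -> ip (S chi) phi = ip chi psi.
Proof.
have [|r r_repr] := @riesz_repr R d n m (fun chi => ip (S chi) phi).
  by move=> a f h; rewrite S_linear ipZDl.
pose mean := #|{: site d n}|%:R^-1 *: \sum_w r w.
exists (fsub r (fun=> mean)); split => [|chi sum_chi].
  rewrite /inX sumrB sumr_const -scaler_nat /mean scalerA mulfV ?scale1r ?subrr //.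
  by rewrite pnatr_eq0 -lt0n; apply/card_gt0P; exists [ffun=> ord0].
by rewrite r_repr [RHS]ipC ipBl (ipC (fun=> mean)) ip_cst_eq0 // subr0 ipC.
Qed.

Lemma adjoint_spec phi : inX (adjoint S phi) /\
  forall chi, inX chi -> ip (S chi) phi = ip chi (adjoint S phi).
Proof. exact: epsilon_spec (adjoint_exists phi). Qed.

End Adjoint.

Section Operators.
Variables (R : realFieldType) (d n m : nat) (A : 'M[R]_(m, d) -> 'M[R]_(m, d)) (c0 : R).
Hypothesis A_linear : forall (a : R) (F G : 'M[R]_(m, d)), A (a *: F + G) = a *: A F + A G.
Hypothesis A_sym : forall F G, frob (A F) G = frob F (A G).
Hypothesis c0_gt0 : 0 < c0.
Hypothesis A_coercive : forall F, c0 * frob F F <= frob (A F) F.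
Variable l : nat.
Hypotheses (d_gt0 : (0 < d)%N) (l_gt1 : (1 < l)%N) (l_le : (l <= n.+1)%N).
Local Notation F := (site d n -> 'cV[R]_m).
Local Notation V := {ffun site d n -> 'cV[R]_m}.
Implicit Types (f g h chi phi psi : F) (x y z : site d n).

Lemma formABl f g h : formA A (fsub f g) h = formA A f h - formA A g h.
Proof. by rewrite fsub_combE formAZDl // mulN1r addrC. Qed.

Lemma grad_eq0 f z : f z = 0 -> (forall j, f (shift z j) = 0) -> grad f z = 0.
Proof. by move=> fz fzj; apply/matrixP => i j; rewrite !mxE fz fzj subrr. Qed.

Section Cell.
Variable x : site d n.

Lemma inVZD a f g : inV l x f -> inV l x g -> inV l x (fun y => a *: f y + g y).
Proof.
move=> [sum_f f0] [sum_g g0]; split; last by move=> y yQ; rewrite f0 // g0 // scaler0 addr0.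
by rewrite /inX big_split /= -scaler_sumr sum_f sum_g scaler0 addr0.
Qed.

Lemma inVB f g : inV l x f -> inV l x g -> inV l x (fsub f g).
Proof. by move=> f_in g_in; rewrite fsub_combE; apply: inVZD. Qed.

(* Zero energy makes [f] shift invariant, hence constant, and [x] lies outside the cell. *)
Lemma inV_formA_eq0 f :
  (forall y, ~~ inQ l x y -> f y = 0) -> formA A f f = 0 -> forall y, f y = 0.
Proof.
move=> f_supp /(formA_eq0_grad c0_gt0 A_coercive) grad0.
have f_shift z j : f (shift z j) = f z.
  apply/matrixP => i k; rewrite (ord1 k); apply/eqP; rewrite -subr_eq0.
  by have /matrixP /(_ i j) := grad0 z; rewrite !mxE => ->.
move=> y; have [/inQP [q _ ->]|/f_supp //] := boolP (inQ l x y).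
by rewrite (addq_shift_invariant f_shift) f_supp // notinQ_self.
Qed.

Definition cell_point := addq x (fun=> 1%N).

Lemma cell_point_inQ : inQ l x cell_point.
Proof. by apply/inQP; exists (fun=> 1%N) => // k; rewrite l_gt1. Qed.

(* An idempotent (not orthogonal) projection of all functions onto [V_x]. *)
Definition cell_proj (g : V) : V :=
  [ffun y => (inQ l x y)%:R *: g y - (y == cell_point)%:R *: \sum_(z | inQ l x z) g z].

Fact cell_proj_is_linear : linear cell_proj.
Proof.
move=> a g h; apply/ffunP => y; rewrite !ffunE.
under eq_bigr do rewrite !ffunE.
rewrite big_split /= -scaler_sumr !scalerDr !scalerN !scalerA !(mulrC a).
by rewrite opprD addrACA.
Qed.

HB.instance Definition _ :=
  GRing.isLinear.Build R V V *:%R cell_proj cell_proj_is_linear.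

Definition cell_space : {vspace V} := limg (linfun cell_proj).

Lemma cell_spaceP (v : V) : v \in cell_space -> inV l x v.
Proof.
case/memv_imgP => g _ ->; rewrite lfunE /=; split => [|y yQ].
  rewrite /inX (eq_bigr _ (fun y _ => ffunE _ y)) sumrB -scaler_suml.
  have -> : \sum_y (y == cell_point)%:R = 1 :> R.
    by rewrite (bigD1 cell_point) //= eqxx big1 ?addr0 // => y /negbTE ->.
  apply/eqP; rewrite scale1r subr_eq0; apply/eqP; rewrite [RHS]big_mkcond; apply: eq_bigr => y _.
  by case: inQ; rewrite ?scale1r ?scale0r.
rewrite ffunE (negbTE yQ) scale0r sub0r.
rewrite (_ : y == cell_point = false) ?scale0r ?oppr0 //.
by apply: contraNF yQ => /eqP ->; apply: cell_point_inQ.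
Qed.

Lemma mem_cell_space f : inV l x f -> [ffun y => f y] \in cell_space.
Proof.
move=> [sum_f f_supp]; suff <- : cell_proj [ffun y => f y] = [ffun y => f y].
  by rewrite -lfunE memv_img ?memvf.
have sumQ : \sum_(z | inQ l x z) f z = 0.
  by rewrite -[in RHS]sum_f [RHS](bigID (inQ l x)) /= [X in _ = _ + X]big1 ?addr0 // => z /f_supp.
apply/ffunP => y; rewrite !ffunE; under eq_bigr do rewrite ffunE.
rewrite sumQ scaler0 subr0.
by have [|/f_supp ->] := boolP (inQ l x y); rewrite ?scale1r ?scaler0.
Qed.

Lemma Pi_exists phi : exists psi, inV l x psi /\
  forall chi, inV l x chi -> formA A (fsub phi psi) chi = 0.
Proof.
pose B (u v : V) := formA A u v.
have B_ZDl a u v w : B (a *: u + v) w = a * B u w + B v w.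
  rewrite /B -formAZDl //; congr formA.
  by apply: functional_extensionality => y; rewrite !ffunE.
have B_sym u v : B u v = B v u by apply: formAC.
have B_ge0 u : 0 <= B u u by apply: formA_ge0 c0_gt0 A_coercive u.
have [P /cell_spaceP P_inV P_orth] :=
  orth_proj_exists B_ZDl B_sym B_ge0 cell_space [ffun y => phi y].
exists (fun y => P y); split => // chi /mem_cell_space /P_orth.
rewrite /B (_ : fun_of_fin _ = fsub phi (fun y => P y)) => [|]; last first.
  by apply: functional_extensionality => y; rewrite !ffunE.
by rewrite (_ : fun_of_fin _ = chi) //; apply: functional_extensionality => y; rewrite ffunE.
Qed.

Lemma Pi_spec phi : inV l x (Pi A l x phi) /\
  forall chi, inV l x chi -> formA A (fsub phi (Pi A l x phi)) chi = 0.
Proof. exact: epsilon_spec (Pi_exists phi). Qed.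

Lemma Pi_unique phi psi : inV l x psi ->
  (forall chi, inV l x chi -> formA A (fsub phi psi) chi = 0) -> Pi A l x phi = psi.
Proof.
move=> psi_in psi_orth; have [Pi_in Pi_orth] := Pi_spec phi.
have D_in : inV l x (fsub (Pi A l x phi) psi) by apply: inVB.
have D_orth chi : inV l x chi -> formA A (fsub (Pi A l x phi) psi) chi = 0.
  move=> chi_in; rewrite (_ : fsub _ psi = fsub (fsub phi psi) (fsub phi (Pi A l x phi))).
    by rewrite formABl // psi_orth // Pi_orth // subrr.
  by apply: functional_extensionality => y; apply/esym; rewrite /fsub opprB addrC addrA subrK.
apply: functional_extensionality => y; apply/eqP; rewrite -subr_eq0.
by apply/eqP; apply: (inV_formA_eq0 D_in.2 (D_orth _ D_in)).
Qed.

Lemma Pi_linear a f g :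
  Pi A l x (fun y => a *: f y + g y) = fun y => a *: Pi A l x f y + Pi A l x g y.
Proof.
have [f_in f_orth] := Pi_spec f; have [g_in g_orth] := Pi_spec g.
apply: Pi_unique => [|chi chi_in]; first exact: inVZD.
rewrite (_ : fsub _ _ = fun y => a *: fsub f (Pi A l x f) y + fsub g (Pi A l x g) y).
  by rewrite formAZDl // f_orth // g_orth // mulr0 addr0.
apply: functional_extensionality => y.
by rewrite /fsub scalerBr opprD addrACA.
Qed.

Lemma grad_neq0_cell chi z : (forall y, ~~ inQ l x y -> chi y = 0) ->
  grad chi z != 0 -> exists2 b : 'I_d -> nat, forall k, (b k < l)%N & z = addq x b.
Proof.
move=> chi_supp grad_neq0; have [/inQP [q q_lt ->]|z_out] := boolP (inQ l x z).
  by exists q => // k; case/andP: (q_lt k).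
case: (pickP (fun j => inQ l x (shift z j))) => [j /inQ_shift //|zj_out].
have chi_zj j : chi (shift z j) = 0 by apply: chi_supp; rewrite zj_out.
by rewrite grad_eq0 ?eqxx ?chi_supp in grad_neq0.
Qed.

Lemma formA_box_eq0 phi chi :
  (forall b, (forall k, b k <= l)%N -> phi (addq x b) = 0) ->
  inV l x chi -> formA A phi chi = 0.
Proof.
move=> phi_box [_ chi_supp]; apply: big1 => z _.
have [->|/(grad_neq0_cell chi_supp) [b b_lt ->]] := eqVneq (grad chi z) 0.
  exact: frob0r.
rewrite grad_eq0 ?(frobA0l A_sym) // => [|j]; first by apply: phi_box => k; apply: ltnW.
by rewrite shift_addq phi_box // => k; case: (k == j); rewrite ?addn0 ?addn1 // ltnW.
Qed.

Lemma Pi_eq0 phi : (forall chi, inV l x chi -> formA A phi chi = 0) -> Pi A l x phi = fun=> 0.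
Proof.
move=> phi_orth; apply: Pi_unique => [|chi /phi_orth]; first by split; rewrite // /inX big1.
by congr (formA A _ _ = 0); apply: functional_extensionality => y; rewrite /fsub subr0.
Qed.

Lemma ip_Pi_eq0 phi psi :
  (forall y, inQ l x y -> psi y != 0 ->
     forall b, (forall k, b k <= l)%N -> phi (addq x b) = 0) ->
  ip (Pi A l x phi) psi = 0.
Proof.
move=> phi_box; have [[_ Pi_supp] _] := Pi_spec phi.
case: (pickP (fun y => inQ l x y && (psi y != 0))) => [y /andP [yQ psi_y]|psi0].
  rewrite Pi_eq0 => [|chi]; last exact: formA_box_eq0 (phi_box y yQ psi_y).
  by apply: ip_eq0 => z; left.
apply: ip_eq0 => y; have [yQ|/Pi_supp] := boolP (inQ l x y); [right | by left].
by move/negbT: (psi0 y); rewrite yQ negbK => /eqP.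
Qed.

End Cell.

Lemma ip_Top phi psi :
  ip (Top A l phi) psi = l%:R ^- d * \sum_x ip (Pi A l x phi) psi.
Proof. by rewrite ipZl ip_suml. Qed.

Lemma Top_linear a f g :
  Top A l (fun y => a *: f y + g y) = fun y => a *: Top A l f y + Top A l g y.
Proof.
apply: functional_extensionality => y; rewrite /Top.
under eq_bigr do rewrite Pi_linear.
by rewrite big_split /= scalerDr -scaler_sumr !scalerA mulrC.
Qed.

Lemma Rop_linear a f g :
  Rop A l (fun y => a *: f y + g y) = fun y => a *: Rop A l f y + Rop A l g y.
Proof.
rewrite /Rop Top_linear; apply: functional_extensionality => y.
by rewrite /fsub scalerBr opprD addrACA.
Qed.

(* Box form of the hypothesis [dist_infty (supp f, supp g) > l - 1]. *)
Definition separated f g := forall x (s t : 'I_d -> nat),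
  (forall k, maxn (s k - t k) (t k - s k) <= l.-1)%N -> f (addq x s) = 0 \/ g (addq x t) = 0.

Lemma separatedC f g : separated f g -> separated g f.
Proof.
by move=> sep x s t st; case: (sep x t s) => [k|?|?]; [rewrite maxnC; apply: st | right | left].
Qed.

Lemma separated_far f g :
  (forall x y, f x != 0 -> g y != 0 -> (l.-1 < rho x y)%N) -> separated f g.
Proof.
move=> far x s t st; have [fs0|fs] := eqVneq (f (addq x s)) 0; [by left | right].
apply/eqP; apply: contraTT (rho_addq_le x st); rewrite -ltnNge; exact: far.
Qed.

Lemma ip_separated_eq0 f g : separated f g -> ip f g = 0.
Proof.
move=> sep; apply: ip_eq0 => y; rewrite -(addq0 y).
by apply: sep => k; rewrite subnn maxnn.
Qed.

Lemma ip_Top_eq0 phi psi : separated phi psi -> ip (Top A l phi) psi = 0.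
Proof.
move=> sep; rewrite ip_Top big1 ?mulr0 // => x _.
apply: ip_Pi_eq0 => _ /inQP [q q_lt ->] psi_q b b_le.
case: (sep x b q) => // [k|psi0]; last by rewrite psi0 eqxx in psi_q.
by move: (b_le k) (q_lt k); lia.
Qed.

End Operators.

Theorem lemma3p7 (R : realFieldType) (d m L N l : nat)
  (A : 'M[R]_(m, d) -> 'M[R]_(m, d)) (c0 : R) :
  (2 <= d)%N -> (1 <= m)%N -> (3 <= L)%N -> odd L -> (1 <= N)%N ->
  (forall (a : R) (F G : 'M[R]_(m, d)), A (a *: F + G) = a *: A F + A G) ->
  (forall F G : 'M[R]_(m, d), frob (A F) G = frob F (A G)) ->
  0 < c0 -> (forall F : 'M[R]_(m, d), c0 * frob F F <= frob (A F) F) ->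
  (3 <= l)%N -> (l.-1 < L ^ N)%N ->
  forall phi psi : site d (L ^ N).-1 -> 'cV[R]_m,
  inX phi -> inX psi ->
  (forall x y, phi x != 0 -> psi y != 0 -> (l.-1 < rho x y)%N) ->
  [/\ ip (Top A l phi) psi = 0,
      ip (adjoint (Top A l) phi) psi = 0,
      ip (Rop A l phi) psi = 0
    & ip (adjoint (Rop A l) phi) psi = 0].
Proof.
move=> d_ge2 _ _ _ _ A_linear A_sym c0_gt0 A_coercive l_ge3 l_lt phi psi _ psi_X far.
have d_gt0 : (0 < d)%N by apply: leq_trans d_ge2.
have l_gt1 : (1 < l)%N by apply: leq_trans l_ge3.
have l_le : (l <= (L ^ N).-1.+1)%N by move: l_lt; case: (L ^ N)%N => //=; lia.
have ipT0 := ip_Top_eq0 A_linear A_sym c0_gt0 A_coercive d_gt0 l_gt1 l_le.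
have [_ Tadj] := adjoint_spec (Top_linear A_linear A_sym c0_gt0 A_coercive d_gt0 l_gt1 l_le) phi.
have [_ Radj] := adjoint_spec (Rop_linear A_linear A_sym c0_gt0 A_coercive d_gt0 l_gt1 l_le) phi.
have sep : separated l phi psi := separated_far far.
have sep' := separatedC sep.
split.
- exact: ipT0.
- by rewrite ipC -Tadj // ipT0.
- by rewrite ipBl (ip_separated_eq0 sep) ipT0 // subrr.
- by rewrite ipC -Radj // ipBl (ip_separated_eq0 sep') ipT0 // subrr.
Qed.
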